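(* Let $\Delta$ be a mesh and let $A\le B$ be discrete quasi-copulas on $\Delta$. Then there exists a discrete copula $C$ on $\Delta$ with $A\le C\le B$ if and only if $L^{(A,B)}(R)\ge0$ for all $R\in\mathfrak{R}$, where $\mathfrak{R}$ consists of finite formal unions of rectangles with corners in $\Delta$.
   Context: A mesh is $\Delta=\delta_x\times\delta_y$ with $\delta_x=\{0=x_0<\dots<x_p=1\}$, $\delta_y=\{0=y_0<\dots<y_q=1\}$. For $Q:\Delta\to\mathbb{R}$ and a rectangle $[s_1,s_2]\times[t_1,t_2]$ with corners in $\Delta$, $V_Q=Q(s_1,t_1)+Q(s_2,t_2)-Q(s_2,t_1)-Q(s_1,t_2)$. $Q$ is a discrete copula if it is grounded ($Q(x,0)=Q(0,y)=0$), has neutral element $1$ ($Q(x,1)=x$, $Q(1,y)=y$) and $V_Q(R)\ge0$ for all rectangles with corners in $\Delta$; a discrete quasi-copula if grounded, with neutral element 1, and $V_Q(R)\ge0$ for all rectangles with corners in $\Delta$ having a side on the boundary of $[0,1]^2$. A rectangle here is nondegenerate ($s_1<s_2$, $t_1<t_2$); main corners: southwest and northeast; opposite corners: southeast and northwest. $\mathfrak{R}$: finite formal unions $R=R_1\sqcup\dots\sqcup R_n$ of such rectangles (repetitions allowed), with multiplicity $m_R(\mathbf{y})=\sum_i m_{R_i}(\mathbf{y})$, where $m_{R_i}(\mathbf{y})$ is $1$ at main corners, $-1$ at opposite corners, $0$ elsewhere. $L^{(A,B)}(R)=\sum_{m_R(\mathbf{y})>0}B(\mathbf{y})m_R(\mathbf{y})+\sum_{m_R(\mathbf{y})<0}A(\mathbf{y})m_R(\mathbf{y})$.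 *)

(* Reals are modelled by an arbitrary real field R
   (the statement is order-algebraic: a linear feasibility statement). *)
From HB Require Import structures.
From mathcomp Require Import all_boot all_order all_algebra.
Set Implicit Arguments. Unset Strict Implicit. Unset Printing Implicit Defensive.
Import Order.TTheory GRing.Theory Num.Theory.
Local Open Scope ring_scope.

Definition is_partition (R : realFieldType) (n : nat) (d : 'I_n.+1 -> R) : Prop :=
  d ord0 = 0 /\ d ord_max = 1 /\
  (forall i j : 'I_n.+1, (i < j)%N -> d i < d j).

(* A function on the mesh Delta = dx x dy is represented by its values on
   grid indices: Q i j = Q(x_i, y_j). *)
Definition meshfun (R : realFieldType) (p q : nat) := 'I_p.+1 -> 'I_q.+1 -> R.

(* A rectangle [x_{i1}, x_{i2}] x [y_{j1}, y_{j2}] with corners in the mesh,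
   encoded as ((i1, i2), (j1, j2)). *)
Definition rect (p q : nat) := (('I_p.+1 * 'I_p.+1) * ('I_q.+1 * 'I_q.+1))%type.

Definition rect_i1 p q (r : rect p q) := r.1.1.
Definition rect_i2 p q (r : rect p q) := r.1.2.
Definition rect_j1 p q (r : rect p q) := r.2.1.
Definition rect_j2 p q (r : rect p q) := r.2.2.

Definition rect_ok p q (r : rect p q) : bool :=
  (rect_i1 r < rect_i2 r)%N && (rect_j1 r < rect_j2 r)%N.

Definition rect_boundary p q (r : rect p q) : bool :=
  [|| (rect_i1 r == 0%N :> nat), (rect_i2 r == p :> nat),
      (rect_j1 r == 0%N :> nat) | (rect_j2 r == q :> nat)].

Definition VQ (R : realFieldType) p q (Q : meshfun R p q) (r : rect p q) : R :=
  Q (rect_i1 r) (rect_j1 r) + Q (rect_i2 r) (rect_j2 r)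
  - Q (rect_i2 r) (rect_j1 r) - Q (rect_i1 r) (rect_j2 r).

Definition grounded (R : realFieldType) p q (Q : meshfun R p q) : Prop :=
  (forall i, Q i ord0 = 0) /\ (forall j, Q ord0 j = 0).

Definition neutral1 (R : realFieldType) p q (x : 'I_p.+1 -> R) (y : 'I_q.+1 -> R)
    (Q : meshfun R p q) : Prop :=
  (forall i, Q i ord_max = x i) /\ (forall j, Q ord_max j = y j).

Definition discrete_copula (R : realFieldType) p q (x : 'I_p.+1 -> R)
    (y : 'I_q.+1 -> R) (Q : meshfun R p q) : Prop :=
  grounded Q /\ neutral1 x y Q /\
  (forall r : rect p q, rect_ok r -> 0 <= VQ Q r).

Definition discrete_quasi_copula (R : realFieldType) p q (x : 'I_p.+1 -> R)
    (y : 'I_q.+1 -> R) (Q : meshfun R p q) : Prop :=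
  grounded Q /\ neutral1 x y Q /\
  (forall r : rect p q, rect_ok r -> rect_boundary r -> 0 <= VQ Q r).

Definition mesh_le (R : realFieldType) p q (P Q : meshfun R p q) : Prop :=
  forall i j, P i j <= Q i j.

Definition mult1 p q (r : rect p q) (i : 'I_p.+1) (j : 'I_q.+1) : int :=
  (((i == rect_i1 r) && (j == rect_j1 r)) : nat)%:Z
  + (((i == rect_i2 r) && (j == rect_j2 r)) : nat)%:Z
  - (((i == rect_i2 r) && (j == rect_j1 r)) : nat)%:Z
  - (((i == rect_i1 r) && (j == rect_j2 r)) : nat)%:Z.

(* an element of frak R: a finite formal union (list, repetitions allowed) *)
Definition mult p q (Rs : seq (rect p q)) i j : int :=
  \sum_(r <- Rs) mult1 r i j.

Definition LAB (R : realFieldType) p q (A B : meshfun R p q) (Rs : seq (rect p q)) : R :=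
  \sum_(i < p.+1) \sum_(j < q.+1)
    (if (0 < mult Rs i j)%R then B i j * (mult Rs i j)%:~R
     else if (mult Rs i j < 0)%R then A i j * (mult Rs i j)%:~R else 0).

(* Finding C means solving a finite system of linear inequalities in the
   unknowns C(x_i, y_j): the rectangle inequalities V_C(R) >= 0 together with
   the box A <= C <= B (groundedness and the neutral element are then inherited
   from A and B, which share them).  By Fourier-Motzkin elimination such a
   system is feasible unless some nonnegative integer combination of its
   inequalities has all coefficients zero and a positive right-hand side.  If
   the rectangles of such a combination form R, the box inequalities must
   contribute the coefficient vector -m_R, and the largest right-hand side they
   can contribute is -L^(A,B)(R); so an obstruction is exactly an R with
   L^(A,B)(R) < 0. *)

From HB Require Import structures.
From mathcomp Require Import all_boot all_order all_algebra.
From mathcomp Require Import ring lra.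
Import Order.TTheory GRing.Theory Num.Theory.
Local Open Scope ring_scope.
Set Implicit Arguments. Unset Strict Implicit.

Lemma exists_between (R : realDomainType) (I J : finType) (P : pred I) (Q : pred J)
    (F : I -> R) (G : J -> R) :
  (forall i j, P i -> Q j -> F i <= G j) ->
  exists t, (forall i, P i -> F i <= t) /\ (forall j, Q j -> t <= G j).
Proof.
move=> FG; exists (\big[Num.max/ \big[Num.min/0]_(j | Q j) G j]_(i | P i) F i).
split=> [i Pi | j Qj]; first exact: le_bigmax_cond.
apply: bigmax_le => [|i Pi]; [exact: bigmin_le_cond | exact: FG].
Qed.

Lemma ler_Ndiv_pos_neg (R : realFieldType) (a b c d : R) :
  0 < a -> b < 0 -> 0 <= c * - b + d * a -> - c / a <= - d / b.
Proof. by move=> a_gt0 b_lt0 cd; rewrite ler_pdivrMr // mulrAC ler_ndivlMr //; nra. Qed.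

Section FourierMotzkin.
Variables (V : finType) (R : realFieldType).

Definition dot (a : V -> int) (x : V -> R) : R := \sum_u (a u)%:~R * x u.

Lemma eq_dot a b x : a =1 b -> dot a x = dot b x.
Proof. by move=> ab; apply: eq_bigr => u _; rewrite ab. Qed.

Lemma dot0 a x : a =1 (fun=> 0) -> dot a x = 0.
Proof. by move=> a0; rewrite /dot big1 // => u _; rewrite a0 mul0r. Qed.

Lemma dotN a x : dot (fun u => - a u) x = - dot a x.
Proof. by rewrite /dot -sumrN; apply: eq_bigr => u _; rewrite intrN mulNr. Qed.

Lemma dotD a b x : dot (fun u => a u + b u) x = dot a x + dot b x.
Proof. by rewrite /dot -big_split; apply: eq_bigr => u _; rewrite intrD mulrDl. Qed.

Lemma dotMn a k x : dot (fun u => a u *+ k) x = dot a x *+ k.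
Proof. by rewrite /dot -sumrMnl; apply: eq_bigr => u _; rewrite raddfMn mulrnAl. Qed.

Lemma dot_eta a x v t : dot a [eta x with v |-> t] = dot a x + (a v)%:~R * (t - x v).
Proof.
rewrite /dot (bigD1 v) //= eqxx [in RHS](bigD1 v) //=.
rewrite (eq_bigr (fun u => (a u)%:~R * x u)) => [|u /negbTE -> //]; ring.
Qed.

(* [(a, b)] stands for the linear inequality [b <= dot a x]. *)
Definition lincon := ((V -> int) * R)%type.

Definition satisfies (x : V -> R) (c : lincon) := c.2 <= dot c.1 x.

Definition slack (x : V -> R) (c : lincon) := dot c.1 x - c.2.

Definition lincon0 : lincon := (fun=> 0, 0).
Definition lincon_add (c d : lincon) : lincon := (fun u => c.1 u + d.1 u, c.2 + d.2).
Definition lincon_muln (c : lincon) (k : nat) : lincon := (fun u => c.1 u *+ k, c.2 *+ k).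

Lemma slack_add x c d : slack x (lincon_add c d) = slack x c + slack x d.
Proof. by rewrite /slack /lincon_add /= dotD; ring. Qed.

Lemma slack_muln x c k : slack x (lincon_muln c k) = slack x c * k%:R.
Proof. by rewrite /slack /lincon_muln /= dotMn -mulrnBl mulr_natr. Qed.

Inductive derived (I : Type) (f : I -> lincon) : lincon -> Prop :=
| derived_base i : derived f (f i)
| derived0 : derived f lincon0
| derivedD c d : derived f c -> derived f d -> derived f (lincon_add c d)
| derived_eq c d : derived f c -> c.1 =1 d.1 -> c.2 = d.2 -> derived f d.

Lemma derivedMn (I : Type) (f : I -> lincon) c k :
  derived f c -> derived f (lincon_muln c k).
Proof.
move=> dc; elim: k => [|k IH].
  by apply: derived_eq (derived0 f) _ _ => [u|] /=; rewrite mulr0n.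
by apply: derived_eq (derivedD dc IH) _ _ => [u|] /=; rewrite mulrS.
Qed.

Section Elimination.
Variables (I : finType) (f : I -> lincon) (v : V).

(* Cancels the variable [v] when [f i] and [f j] have opposite signs at [v]. *)
Definition fm_pair (i j : I) : lincon :=
  lincon_add (lincon_muln (f i) `|(f j).1 v|) (lincon_muln (f j) `|(f i).1 v|).

Definition fm_eliminate (k : I + I * I) : lincon :=
  match k with
  | inl i => if (f i).1 v == 0 then f i else lincon0
  | inr (i, j) => if (0 < (f i).1 v) && ((f j).1 v < 0) then fm_pair i j else lincon0
  end.

Lemma fm_eliminate_derived c : derived fm_eliminate c -> derived f c.
Proof.
elim=> {c} [[i|[i j]] /=| |c d _ dc _ dd|c d _ dc e1 e2].
- by case: ifP => _; [exact: derived_base | exact: derived0].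
- by case: ifP => _; [apply: derivedD; apply/derivedMn/derived_base | exact: derived0].
- exact: derived0.
- exact: derivedD.
- exact: derived_eq dc e1 e2.
Qed.

Lemma fm_eliminate_coef k : (fm_eliminate k).1 v = 0.
Proof.
case: k => [i|[i j]]; rewrite /fm_eliminate; first by case: ifP => [/eqP|].
case: ifP => [/andP[pi nj]|//]; rewrite /fm_pair /lincon_add /lincon_muln; simpl fst.
rewrite -(mulr_natr ((f i).1 v)) -(mulr_natr ((f j).1 v)) !natr_absz !intz.
by rewrite (gtr0_norm pi) (ltr0_norm nj) mulrN mulrC addNr.
Qed.

Lemma fm_eliminate_support k u : (forall i, (f i).1 u = 0) -> (fm_eliminate k).1 u = 0.
Proof.
move=> fu0; case: k => [i|[i j]]; rewrite /fm_eliminate; first by case: ifP.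
case: ifP => // _; rewrite /fm_pair /lincon_add /lincon_muln; simpl fst.
by rewrite !fu0 !mul0rn addr0.
Qed.

Lemma fm_eliminate_lift x :
  (forall k, satisfies x (fm_eliminate k)) ->
  exists t, forall i, satisfies [eta x with v |-> t] (f i).
Proof.
move=> satx.
pose bound i := - slack x (f i) / ((f i).1 v)%:~R.
have bound_le i j : 0 < (f i).1 v -> (f j).1 v < 0 -> bound i <= bound j.
  move=> pi nj; have := satx (inr (i, j)); rewrite /fm_eliminate pi nj /satisfies -subr_ge0.
  rewrite -/(slack x (fm_pair i j)) slack_add !slack_muln !natr_absz.
  rewrite (gtr0_norm pi) (ltr0_norm nj) intrN => pair_ge0.
  by apply: ler_Ndiv_pos_neg; rewrite ?ltr0z ?ltrz0.
have [s [lo hi]] := exists_between bound_le.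
exists (s + x v) => i; rewrite /satisfies dot_eta addrK.
case: (ltgtP ((f i).1 v) 0) => [ni|pi|zi].
- by have := hi i ni; rewrite /bound /slack ler_ndivlMr ?ltrz0 //; lra.
- by have := lo i pi; rewrite /bound /slack ler_pdivrMr ?ltr0z //; lra.
- by have := satx (inl i); rewrite /fm_eliminate zi eqxx mul0r addr0.
Qed.
End Elimination.

Lemma fourier_motzkin_on (n : nat) (S : {set V}) (I : finType) (f : I -> lincon) :
  #|S| = n -> (forall i u, u \notin S -> (f i).1 u = 0) ->
  (forall c, derived f c -> c.1 =1 (fun=> 0) -> c.2 <= 0) ->
  exists x, forall i, satisfies x (f i).
Proof.
elim: n S I f => [|n IH] S I f cardS suppS infeasible.
  have f0 i : (f i).1 =1 (fun=> 0) by move=> u; apply: suppS; rewrite (cards0_eq cardS) inE.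
  by exists (fun=> 0) => i; rewrite /satisfies dot0 //; apply: infeasible (derived_base f i) _.
have [v vS] : exists v, v \in S by apply/set0Pn; rewrite -card_gt0 cardS.
have [|k u|c /fm_eliminate_derived|x satx] := IH (S :\ v) _ (fm_eliminate f v).
- by move: cardS; rewrite (cardsD1 v) vS => -[].
- rewrite !inE negb_and negbK => /orP[/eqP->|uS]; first exact: fm_eliminate_coef.
  by apply: fm_eliminate_support => i; apply: suppS.
- exact: infeasible.
have [t satt] := fm_eliminate_lift satx.
by exists [eta x with v |-> t].
Qed.

Theorem fourier_motzkin (I : finType) (f : I -> lincon) :
  (forall c, derived f c -> c.1 =1 (fun=> 0) -> c.2 <= 0) ->
  exists x, forall i, satisfies x (f i).
Proof.
by apply: (fourier_motzkin_on (n := #|[set: V]|) (S := setT)) => // i u; rewrite inE.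
Qed.

End FourierMotzkin.

Section BoxMinimum.
Variables (V : finType) (R : realFieldType).
Implicit Types (lo hi x : V -> R) (a : V -> int).

(* For [lo <= hi], the minimum of [dot a] over the box [lo <= x <= hi]. *)
Definition box_min lo hi a : R :=
  \sum_u Num.min ((a u)%:~R * lo u) ((a u)%:~R * hi u).

Lemma box_min_le_dot lo hi a x :
  (forall u, lo u <= x u) -> (forall u, x u <= hi u) -> box_min lo hi a <= dot a x.
Proof.
move=> lo_x x_hi; apply: ler_sum => u _; rewrite ge_min.
have [a_ge0|a_lt0] := lerP 0 ((a u)%:~R : R).
  by rewrite (ler_wpM2l a_ge0 (lo_x u)).
by rewrite (ler_wnM2l (ltW a_lt0) (x_hi u)) orbT.
Qed.

Lemma box_minD lo hi a b :
  box_min lo hi a + box_min lo hi b <= box_min lo hi (fun u => a u + b u).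
Proof.
rewrite /box_min -big_split; apply: ler_sum => u _.
by rewrite le_min intrD !mulrDl !lerD // ge_min lexx ?orbT.
Qed.

Lemma eq_box_min lo hi a b : a =1 b -> box_min lo hi a = box_min lo hi b.
Proof. by move=> ab; apply: eq_bigr => u _; rewrite ab. Qed.

Lemma box_min0 lo hi a : a =1 (fun=> 0) -> box_min lo hi a = 0.
Proof. by move=> a0; rewrite /box_min big1 // => u _; rewrite a0 !mul0r minxx. Qed.

Definition delta (w u : V) : int := (u == w : nat)%:Z.

Lemma dot_delta w x : dot (delta w) x = x w.
Proof.
rewrite /dot (bigD1 w) //= big1 => [|u /negbTE uw]; rewrite /delta ?eqxx ?mul1r ?addr0 //.
by rewrite uw mul0r.
Qed.

Lemma box_min_delta lo hi w : lo w <= hi w -> box_min lo hi (delta w) = lo w.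
Proof.
move=> lohi; rewrite /box_min (bigD1 w) //= big1 => [|u /negbTE uw].
  by rewrite /delta eqxx !mul1r (min_l lohi) addr0.
by rewrite /delta uw !mul0r minxx.
Qed.

Lemma box_min_Ndelta lo hi w :
  lo w <= hi w -> box_min lo hi (fun u => - delta w u) = - hi w.
Proof.
move=> lohi; rewrite /box_min (bigD1 w) //= big1 => [|u /negbTE uw].
  by rewrite /delta eqxx !mulN1r (min_r _) ?lerN2 ?addr0.
by rewrite /delta uw oppr0 !mul0r minxx.
Qed.

End BoxMinimum.

Definition point p q := ('I_p.+1 * 'I_q.+1)%type.

Section CopulaSystem.
Variables (R : realFieldType) (p q : nat).
Implicit Types (A B C : meshfun R p q) (Rs : seq (rect p q)).

Definition mesh_vec C : point p q -> R := fun u => C u.1 u.2.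
Definition mult_vec Rs : point p q -> int := fun u => mult Rs u.1 u.2.

Lemma dot_mult1 (r : rect p q) (x : point p q -> R) :
  dot (fun u => mult1 r u.1 u.2) x = VQ (fun i j => x (i, j)) r.
Proof.
have mult1E u : mult1 r u.1 u.2 =
    delta (rect_i1 r, rect_j1 r) u + delta (rect_i2 r, rect_j2 r) u
    - delta (rect_i2 r, rect_j1 r) u - delta (rect_i1 r, rect_j2 r) u.
  by case: u => i j; rewrite /mult1 /delta !xpair_eqE.
by rewrite (eq_dot x mult1E) !dotD !dotN !dot_delta.
Qed.

Lemma dot_mult_vec Rs (x : point p q -> R) :
  dot (mult_vec Rs) x = \sum_(r <- Rs) VQ (fun i j => x (i, j)) r.
Proof.
rewrite /dot /mult_vec /mult; under eq_bigr do rewrite rmorph_sum mulr_suml.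
by rewrite exchange_big; apply: eq_bigr => r _; apply: dot_mult1.
Qed.

Lemma LAB_box_min A B Rs :
  mesh_le A B -> LAB A B Rs = - box_min (mesh_vec A) (mesh_vec B) (fun u => - mult_vec Rs u).
Proof.
move=> AB; rewrite /LAB pair_bigA /= -sumrN; apply: eq_bigr => -[i j] _.
rewrite /mesh_vec /mult_vec /=; have ABij := AB i j.
case: (ltgtP (mult Rs i j) 0) => [m_lt0|m_gt0|->]; rewrite ?intrN.
- have m_ge0 : 0 <= - (mult Rs i j)%:~R :> R by rewrite oppr_ge0 lerz0 ltW.
  by rewrite min_l ?ler_wpM2l // mulNr opprK mulrC.
- have m_le0 : - (mult Rs i j)%:~R <= 0 :> R by rewrite oppr_le0 ler0z ltW.
  by rewrite min_r ?ler_wnM2l // mulNr opprK mulrC.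
- by rewrite oppr0 !mul0r minxx oppr0.
Qed.

Definition copula_system A B
    (k : {r : rect p q | rect_ok r} + point p q + point p q) : lincon (point p q) R :=
  match k with
  | inl (inl r) => (fun u => mult1 (val r) u.1 u.2, 0)
  | inl (inr w) => (delta w, A w.1 w.2)
  | inr w => (fun u => - delta w u, - B w.1 w.2)
  end.

(* [c.1 - mult_vec Rs] is the part of [c.1] coming from the box inequalities. *)
Lemma copula_system_derived A B c :
  mesh_le A B -> derived (copula_system A B) c ->
  exists2 Rs, all (@rect_ok p q) Rs &
    c.2 <= box_min (mesh_vec A) (mesh_vec B) (fun u => c.1 u - mult_vec Rs u).
Proof.
move=> AB; elim=> {c} [[[r|w]|w]| |c d _ [Rs1 ok1 c_le] _ [Rs2 ok2 d_le]
                     |c d _ [Rs ok c_le] cd1 cd2].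
- exists [:: val r]; rewrite /= ?(valP r) // box_min0 // => u.
  by rewrite /mult_vec /mult big_seq1 subrr.
- exists [::] => //; rewrite (eq_box_min _ _ (b := delta w)) => [|u].
    by rewrite box_min_delta //; apply: AB.
  by rewrite /mult_vec /mult big_nil subr0.
- exists [::] => //; rewrite (eq_box_min _ _ (b := fun u => - delta w u)) => [|u].
    by rewrite box_min_Ndelta ?lerN2 //; apply: AB.
  by rewrite /mult_vec /mult big_nil subr0.
- by exists [::] => //; rewrite box_min0 // => u; rewrite /mult_vec /mult big_nil subr0.
- exists (Rs1 ++ Rs2); first by rewrite all_cat ok1 ok2.
  rewrite (eq_box_min _ _ (b := fun u => c.1 u - mult_vec Rs1 u + (d.1 u - mult_vec Rs2 u))).
    exact: le_trans (lerD c_le d_le) (box_minD _ _ _ _).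
  by move=> u; rewrite /mult_vec /mult big_cat /=; ring.
- exists Rs => //; rewrite -cd2 (eq_box_min _ _ (b := fun u => c.1 u - mult_vec Rs u)) //.
  by move=> u; rewrite cd1.
Qed.

Lemma grounded_between A B C :
  grounded A -> grounded B -> mesh_le A C -> mesh_le C B -> grounded C.
Proof.
move=> [A_0 A0_] [B_0 B0_] AC CB; split=> k; apply/le_anti/andP.
  by rewrite -{1}(B_0 k) -(A_0 k) CB AC.
by rewrite -{1}(B0_ k) -(A0_ k) CB AC.
Qed.

Lemma neutral1_between (x : 'I_p.+1 -> R) (y : 'I_q.+1 -> R) A B C :
  neutral1 x y A -> neutral1 x y B -> mesh_le A C -> mesh_le C B -> neutral1 x y C.
Proof.
move=> [A_1 A1_] [B_1 B1_] AC CB; split=> k; apply/le_anti/andP.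
  by rewrite -{1}(B_1 k) -(A_1 k) CB AC.
by rewrite -{1}(B1_ k) -(A1_ k) CB AC.
Qed.

End CopulaSystem.

Theorem mainTheorem14 (R : realFieldType) (p q : nat)
    (x : 'I_p.+1 -> R) (y : 'I_q.+1 -> R) (A B : meshfun R p q) :
  is_partition x -> is_partition y ->
  discrete_quasi_copula x y A -> discrete_quasi_copula x y B ->
  mesh_le A B ->
  (exists C : meshfun R p q,
      discrete_copula x y C /\ mesh_le A C /\ mesh_le C B)
  <->
  (forall Rs : seq (rect p q), all (@rect_ok p q) Rs -> 0 <= LAB A B Rs).
Proof.
move=> _ _ [gA [nA _]] [gB [nB _]] AB; split.
- case=> C [[_ [_ VQ_ge0]] [AC CB]] Rs Rs_ok.
  rewrite (LAB_box_min _ AB) oppr_ge0.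
  apply: le_trans (box_min_le_dot _ (fun u => AC u.1 u.2) (fun u => CB u.1 u.2)) _.
  rewrite dotN oppr_le0 dot_mult_vec big_seq sumr_ge0 // => r /(allP Rs_ok).
  exact: VQ_ge0.
- move=> LAB_ge0.
  have [c /(copula_system_derived AB) [Rs Rs_ok c_le] c0|X satX] :=
    fourier_motzkin (f := copula_system A B).
    rewrite (eq_box_min _ _ (b := fun u => - mult_vec Rs u)) in c_le => [|u].
      by apply: le_trans c_le _; rewrite -oppr_ge0 -LAB_box_min // LAB_ge0.
    by rewrite c0 sub0r.
  pose C : meshfun R p q := fun i j => X (i, j).
  have AC : mesh_le A C.
    by move=> i j; have := satX (inl (inr (i, j))); rewrite /satisfies dot_delta.
  have CB : mesh_le C B.
    by move=> i j; have := satX (inr (i, j)); rewrite /satisfies dotN dot_delta lerN2.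
  exists C; split=> //; split; first exact: grounded_between gA gB AC CB.
  split; first exact: neutral1_between nA nB AC CB.
  by move=> r r_ok; have := satX (inl (inl (exist _ r r_ok))); rewrite /satisfies dot_mult1.
Qed.
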